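(* Let $\mathbf{A}\in\mathbb{Z}^{r\times n}$ be a fixed matrix, let $s\ge1$, and let $\mathbf{x}\in\{-1,0,1\}^n$ be random with independent coordinates, where for each $i$, $x_i=0$ with probability $1-\frac{2c}{s}$ and $x_i=1$ or $x_i=-1$ each with probability $\frac{c}{s}$, for a sufficiently small absolute constant $c>0$. Suppose there exist $\mathbf{y}\in\mathbb{R}^r$ and $j\in[n]$ such that $|\mathrm{Frac}((\mathbf{y}^\top\mathbf{A})_j)|^2\ge\frac{1}{s}\|\mathrm{Frac}(\mathbf{y}^\top\mathbf{A})\|_2^2$. Then the mutual information satisfies $I(\mathbf{A}\mathbf{x};x_j)=\Omega\left(\frac{1}{s}\right)$.
   Context: For $x\in\mathbb{R}$, $\mathrm{Frac}(x)=x-\mathrm{int}(x)\in(-\tfrac12,\tfrac12]$, where $\mathrm{int}(x)$ is the integer closest to $x$; for a vector, $\mathrm{Frac}$ is applied coordinatewise. $I(\cdot;\cdot)$ denotes Shannon mutual information. *)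

From mathcomp Require Import all_boot all_order all_algebra.
From mathcomp Require Import all_classical all_reals all_analysis.
Set Implicit Arguments. Unset Strict Implicit. Unset Printing Implicit Defensive.
Import Order.TTheory GRing.Theory Num.Theory.
Local Open Scope ring_scope.

Section Defs.
Variable R : realType.

(* Frac x = x - int(x) in (-1/2, 1/2], int(x) the nearest integer
   (ties x = k + 1/2 resolved so that Frac x = 1/2). *)
Definition Frac (x : R) : R := x - (Num.ceil (x - 2^-1))%:~R.

Definition probE (Om : finType) (P : Om -> R) (E : pred Om) : R :=
  \sum_(w | E w) P w.

Definition mutual_info (Om : finType) (T1 T2 : eqType) (P : Om -> R)
    (X : Om -> T1) (Y : Om -> T2) : R :=
  \sum_(a <- undup [seq X w | w <- enum Om])
   \sum_(b <- undup [seq Y w | w <- enum Om])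
     let pab := probE P (fun w => (X w == a) && (Y w == b)) in
     if pab == 0 then 0
     else pab * ln (pab / (probE P (fun w => X w == a) *
                           probE P (fun w => Y w == b))).

Definition sgn3 (k : 'I_3) : int := (val k)%:Z - 1.

Definition coord_law (c s : R) (k : 'I_3) : R :=
  if val k == 1%N then 1 - 2 * c / s else c / s.

Definition xlaw (n : nat) (c s : R) (w : {ffun 'I_n -> 'I_3}) : R :=
  \prod_(i < n) coord_law c s (w i).

Definition xvec (n : nat) (w : {ffun 'I_n -> 'I_3}) : 'cV[int]_n :=
  \col_i sgn3 (w i).

Definition yA (r n : nat) (y : 'rV[R]_r) (A : 'M[int]_(r, n)) : 'rV[R]_n :=
  y *m map_mx (fun z : int => z%:~R) A.

End Defs.

From mathcomp Require Import all_boot all_order all_algebra.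
From mathcomp Require Import all_classical all_reals all_analysis.
From mathcomp Require Import ring lra.
Set Implicit Arguments. Unset Strict Implicit. Unset Printing Implicit Defensive.
Import Order.TTheory GRing.Theory Num.Theory.
Local Open Scope ring_scope.

(* Write theta = Frac (y^T A), t = theta_j and h = |t| / 2.  Modulo 1,
   y.(A x) - t equals t (x_j - 1) + W with W = sum_(k <> j) theta_k x_k, which
   is independent of x_j, centred, and of variance (2c/s) sum_(k <> j) theta_k^2
   <= 2 c t^2 by the heaviness of j.  So the test "|Frac (y.(A x) - t)| < h"
   fires together with x_j = 1 with probability >= (1 - 8c) c/s (Chebyshev on
   W), but fires at all with probability <= 2c/s + 8c, since for x_j = 0 it
   forces |W| >= h.  The joint event is therefore 16 times likelier than under
   the product of the marginals, and the log-sum inequality on the event and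
   its complement turns this into I(A x; x_j) >= c / (4 s). *)

Section Frac.
Variable R : realType.
Implicit Types (x u t : R) (m : int).

Lemma Frac_itv x : - 2^-1 < Frac x <= 2^-1.
Proof.
rewrite /Frac; have /andP[] := ceil_itv (x - 2^-1); rewrite rmorphB /=.
move=> ? ?; apply/andP; split; lra.
Qed.

Lemma FracDz x m : Frac (x + m%:~R) = Frac x.
Proof.
rewrite /Frac [x + m%:~R - 2^-1]addrAC ceilDrz ?intr_int // intrKceil rmorphD /=; lra.
Qed.

Lemma Frac_id_norm x : `|x| + `|Frac x| < 1 -> Frac x = x.
Proof.
rewrite /Frac; set m := Num.ceil _ => small.
suff -> : m = 0 by rewrite subr0.
apply/eqP; apply: contraTT small => m_neq0; rewrite -leNgt.
have := @norm_intr_ge1 _ (m%:~R : R) (intr_int _ _); rewrite intr_eq0 => /(_ m_neq0).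
have := ler_normB x (x - m%:~R); rewrite opprB addrC subrK; lra.
Qed.

Lemma Frac_small_id x : `|x| < 2^-1 -> Frac x = x.
Proof.
move=> x_small; apply: Frac_id_norm.
have /andP[? ?] := Frac_itv x.
have : `|Frac x| <= 2^-1 by rewrite ler_norml; apply/andP; split; lra.
lra.
Qed.

Lemma Frac_sub_small t u :
  `|t| <= 2^-1 -> `|Frac (u - t)| < `|t| / 2 -> `|t| / 2 <= `|u|.
Proof.
move=> t_le hF; rewrite leNgt; apply/negP => u_lt.
have ut_le : `|u - t| <= `|u| + `|t| by rewrite ler_normB.
have := ler_normB u (u - t); rewrite opprB addrC subrK => t_le_sum.
have Fid : Frac (u - t) = u - t by apply: Frac_id_norm; lra.
rewrite Fid in hF; lra.
Qed.

Lemma mulmx_intr_Frac n (u : 'rV[R]_n) (z : 'cV[int]_n) :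
  exists M : int, (u *m map_mx intr z) 0 0 = \sum_k Frac (u 0 k) * (z k 0)%:~R + M%:~R.
Proof.
exists (\sum_k Num.ceil (u 0 k - 2^-1) * z k 0).
rewrite !mxE rmorph_sum -big_split /=; apply: eq_bigr => k _.
by rewrite mxE /Frac rmorphM /=; ring.
Qed.

End Frac.

Section RelativeEntropy.
Variable R : realType.

Lemma ln_ge1BV (u : R) : 0 < u -> 1 - u^-1 <= ln u.
Proof.
move=> u_gt0; have := @le_ln1Dx R (u^-1 - 1).
rewrite addrCA subrr addr0 lnV ?posrE //.
have := invr_gt0 u; rewrite u_gt0 => ? /(_ _); lra.
Qed.

Definition kl_term (a b : R) : R := if a == 0 then 0 else a * ln (a / b).

Lemma kl_term_ge_tangent (a b v : R) :
  0 <= a -> 0 <= b -> (a != 0 -> 0 < b) -> 0 < v ->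
  a * ln v + a - b * v <= kl_term a b.
Proof.
move=> a_ge0 b_ge0 ab v_gt0; rewrite /kl_term; case: eqP => [->|/eqP a_neq0].
  by rewrite mul0r addr0 subr_le0 mulr_ge0 // ltW.
have a_gt0 : 0 < a by rewrite lt_def a_neq0.
have b_gt0 := ab a_neq0.
have := @ln_ge1BV (a / b / v) (divr_gt0 (divr_gt0 a_gt0 b_gt0) v_gt0).
rewrite ln_div ?posrE ?divr_gt0 // => /(ler_wpM2l (ltW a_gt0)).
rewrite mulrBr mulr1 mulrBr.
have -> : a * (a / b / v)^-1 = b * v by field; rewrite !gt_eqF.
lra.
Qed.

Lemma kl_term_geB (a b : R) :
  0 <= a -> 0 <= b -> (a != 0 -> 0 < b) -> a - b <= kl_term a b.
Proof.
move=> a_ge0 b_ge0 ab; have := @kl_term_ge_tangent a b 1 a_ge0 b_ge0 ab ltr01.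
by rewrite ln1 mulr0 add0r mulr1.
Qed.

Lemma log_sum_ineq (I : Type) (r : seq I) (S : pred I) (a b : I -> R) :
  (forall i, 0 <= a i) -> (forall i, 0 <= b i) -> (forall i, a i != 0 -> 0 < b i) ->
  0 < \sum_(i <- r | S i) a i -> 0 < \sum_(i <- r | S i) b i ->
  (\sum_(i <- r | S i) a i) * ln ((\sum_(i <- r | S i) a i) / \sum_(i <- r | S i) b i)
    <= \sum_(i <- r | S i) kl_term (a i) (b i).
Proof.
set A := \sum_(i <- r | S i) a i; set B := \sum_(i <- r | S i) b i.
move=> a_ge0 b_ge0 ab A_gt0 B_gt0.
apply: le_trans (ler_sum _ (fun i _ => @kl_term_ge_tangent (a i) (b i) (A / B)
                                 (a_ge0 i) (b_ge0 i) (@ab i) (divr_gt0 A_gt0 B_gt0))).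
rewrite !big_split /= sumrN -!mulr_suml -/A -/B mulrCA mulfV ?gt_eqF // mulr1.
lra.
Qed.

Lemma kl_event_ratio16 (al be : R) :
  0 < be -> 16 * be <= al -> al <= al * ln (al / be) + be - al.
Proof.
move=> be_gt0 ratio; have al_gt0 : 0 < al by lra.
have ln2 : 2^-1 <= ln (2 : R) by have := @ln_ge1BV 2 (ltr0Sn _ 1); lra.
have ln16 : 2 <= ln (16 : R) by rewrite (_ : 16 = 2 ^+ 4) ?lnXn //; [lra | ring].
have : 2 <= ln (al / be).
  by apply: le_trans ln16 _; rewrite ler_ln ?posrE ?divr_gt0 // ler_pdivlMr.
move/(ler_wpM2l (ltW al_gt0)); lra.
Qed.

End RelativeEntropy.

Lemma sum_fibers (V : nmodType) (I : finType) (J : eqType) (r : seq J)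
    (f : I -> J) (F : I -> V) :
  uniq r -> \sum_(j <- r) \sum_(i | f i == j) F i = \sum_(i | f i \in r) F i.
Proof.
elim: r => [_|a r IH /andP[a_notin r_uniq]]; first by rewrite big_nil big_pred0.
rewrite big_cons IH // [RHS](bigID (fun i => f i == a)) /=.
congr (_ + _); apply: eq_bigl => i; rewrite in_cons.
  by case: (f i == a); rewrite ?andbF.
have [->|fi_neq] := eqVneq (f i) a; first by rewrite (negbTE a_notin).
by rewrite andbT.
Qed.

Section FiniteProbability.
Variables (R : realType) (Om : finType) (P : Om -> R).
Hypothesis P_ge0 : forall w, 0 <= P w.
Implicit Types E F : pred Om.

Lemma probE_ge0 E : 0 <= probE P E.
Proof. exact: sumr_ge0. Qed.

Lemma probE_mono E F : (forall w, E w -> F w) -> probE P E <= probE P F.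
Proof.
move=> EF; rewrite /probE [leRHS](bigID E) /=.
under [X in _ <= X + _]eq_bigl => w do rewrite (andb_idl (@EF w)).
by rewrite lerDl sumr_ge0.
Qed.

Lemma probE_indicator E : probE P E = \sum_w P w * (E w)%:R.
Proof.
by rewrite /probE big_mkcond; apply: eq_bigr => w _; case: (E w); rewrite ?mulr1 ?mulr0.
Qed.

Lemma probE_split E F :
  probE P E = probE P (fun w => E w && F w) + probE P (fun w => E w && ~~ F w).
Proof. exact: bigID. Qed.

Lemma probEC E : \sum_w P w = 1 -> probE P (fun w => ~~ E w) = 1 - probE P E.
Proof. by move=> <-; rewrite (bigID E) /= addrAC subrr add0r. Qed.

Lemma chebyshev_event E (F : Om -> R) (h : R) : 0 < h ->
  probE P (fun w => E w && (h <= `|F w|)) <= h ^- 2 * \sum_w P w * ((E w)%:R * F w ^+ 2).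
Proof.
move=> h_gt0; rewrite /probE big_mkcond mulr_sumr /=; apply: ler_sum => w _.
case: (E w); rewrite /= ?mul0r ?mulr0 //= mul1r.
have h2_gt0 : 0 < h ^+ 2 by rewrite exprn_gt0.
case: (lerP h `|F w|) => [hF|_].
  rewrite mulrCA ler_peMr // ler_pdivlMl // mulr1 -[F w ^+ 2]real_normK ?num_real //.
  by rewrite lerXn2r // nnegrE ?normr_ge0 ?ltW.
by rewrite mulr_ge0 ?invr_ge0 ?sqr_ge0 // mulr_ge0 ?sqr_ge0.
Qed.

End FiniteProbability.

Section MutualInformation.
Variables (R : realType) (Om : finType) (T1 T2 : eqType).
Variables (P : Om -> R) (X : Om -> T1) (Y : Om -> T2).
Hypotheses (P_ge0 : forall w, 0 <= P w) (P_sum1 : \sum_w P w = 1).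

Let values := [seq (a, b) | a <- undup [seq X w | w <- enum Om],
                            b <- undup [seq Y w | w <- enum Om]].
Let joint (ab : T1 * T2) := probE P (fun w => (X w, Y w) == ab).
Let indep (ab : T1 * T2) :=
  probE P (fun w => X w == ab.1) * probE P (fun w => Y w == ab.2).

Let mutual_info_kl :
  mutual_info P X Y = \sum_(ab <- values) kl_term (joint ab) (indep ab).
Proof. by rewrite big_allpairs. Qed.

Let sum_values_fibers (I : finType) (f : I -> T1 * T2) (G : I -> R)
    (Q : pred (T1 * T2)) :
  (forall i, exists w w', f i = (X w, Y w')) ->
  \sum_(ab <- values | Q ab) \sum_(i | f i == ab) G i = \sum_(i | Q (f i)) G i.
Proof.
move=> f_values; rewrite -big_filter sum_fibers ?filter_uniq //; last first.
  by rewrite allpairs_uniq ?undup_uniq // => -[? ?] [? ?] _ _ [-> ->].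
apply: eq_bigl => i; rewrite mem_filter andb_idr //.
have [w [w' ->]] := f_values i => _.
by apply: allpairs_f; rewrite mem_undup; apply: map_f; rewrite mem_enum.
Qed.

Let sum_joint (Q : pred (T1 * T2)) :
  \sum_(ab <- values | Q ab) joint ab = probE P (fun w => Q (X w, Y w)).
Proof. by apply: sum_values_fibers => w; exists w, w. Qed.

Let sum_indep (Q : pred (T1 * T2)) :
  \sum_(ab <- values | Q ab) indep ab =
  \sum_w P w * probE P (fun w' => Q (X w, Y w')).
Proof.
have indepE ab : indep ab = \sum_(u | (X u.1, Y u.2) == ab) P u.1 * P u.2.
  by case: ab => a b; rewrite /indep /probE big_distrlr pair_big.
under eq_bigr => ab _ do rewrite indepE.
rewrite sum_values_fibers => [|[w w']]; last by exists w, w'.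
rewrite /probE; under [RHS]eq_bigr => w _ do rewrite big_distrr /=.
by rewrite pair_big_dep.
Qed.

Theorem mutual_info_ge_event (S : pred (T1 * T2)) :
  let al := probE P (fun w => S (X w, Y w)) in
  let be := \sum_w P w * probE P (fun w' => S (X w, Y w')) in
  0 < al -> 0 < be -> al * ln (al / be) + be - al <= mutual_info P X Y.
Proof.
move=> al be al_gt0 be_gt0.
have joint_ge0 ab : 0 <= joint ab by exact: probE_ge0.
have indep_ge0 ab : 0 <= indep ab by rewrite mulr_ge0 ?probE_ge0.
have indep_gt0 ab : joint ab != 0 -> 0 < indep ab.
  move=> joint_neq0; have joint_gt0 : 0 < joint ab by rewrite lt_def joint_neq0 joint_ge0.
  rewrite /indep; case: ab joint_gt0 {joint_neq0} => a b joint_gt0.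
  by apply: mulr_gt0; apply: lt_le_trans joint_gt0 _; apply: probE_mono => // w /andP[].
rewrite mutual_info_kl (bigID S) /= -addrA.
apply: lerD.
  have := log_sum_ineq (r := values) (S := S) joint_ge0 indep_ge0 indep_gt0.
  by rewrite sum_joint sum_indep; apply.
apply: le_trans _ (ler_sum _ (fun ab _ => kl_term_geB (joint_ge0 ab) (indep_ge0 ab)
                                                    (@indep_gt0 ab))).
rewrite sumrB (sum_joint (predC S)) (sum_indep (predC S)) probEC //.
under eq_bigr => w _ do rewrite probEC // mulrBr mulr1.
rewrite sumrB P_sum1 -/al -/be; lra.
Qed.

End MutualInformation.

Definition prod_law (R : comRingType) (T : finType) (mu : T -> R) (n : nat)
    (w : {ffun 'I_n -> T}) : R :=
  \prod_i mu (w i).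

Section ProductLaw.
Variables (R : comRingType) (T : finType) (mu : T -> R) (n : nat).
Hypothesis mu_sum1 : \sum_t mu t = 1.
Local Notation E f := (\sum_t mu t * f t).

Lemma prod_law_prod (g : 'I_n -> T -> R) :
  \sum_w prod_law mu w * \prod_i g i (w i) = \prod_i E (g i).
Proof. by rewrite bigA_distr_bigA; apply: eq_bigr => w _; rewrite -big_split. Qed.

Lemma prod_pick (k : 'I_n) (f : T -> R) (w : {ffun 'I_n -> T}) :
  \prod_i (if i == k then f (w i) else 1) = f (w k).
Proof. by rewrite -big_mkcond big_pred1_eq. Qed.

Let mean1 : E (fun=> 1) = 1.
Proof. by rewrite -[RHS]mu_sum1; apply: eq_bigr => t _; rewrite mulr1. Qed.

Lemma prod_law_coord (j : 'I_n) (phi : T -> R) : \sum_w prod_law mu w * phi (w j) = E phi.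
Proof.
under eq_bigr => w _ do rewrite -(prod_pick j phi w).
rewrite (prod_law_prod (fun i t => if i == j then phi t else 1)).
rewrite (bigD1 j) //= eqxx [X in _ * X]big1 ?mulr1 // => i /negbTE ->.
exact: mean1.
Qed.

Lemma prod_law_sum1 : \sum_(w : {ffun 'I_n -> T}) prod_law mu w = 1.
Proof.
have := prod_law_prod (fun _ _ => 1).
rewrite [RHS]big1 => [|i _]; last exact: mean1.
by move=> <-; apply: eq_bigr => w _; rewrite big1_eq mulr1.
Qed.

Lemma prod_law_coord3 (j k l : 'I_n) (phi g : T -> R) : k != j -> l != j ->
  \sum_w prod_law mu w * (phi (w j) * (g (w k) * g (w l))) =
  E phi * (if k == l then E (fun t => g t ^+ 2) else E g ^+ 2).
Proof.
move=> kj lj.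
pose h i t := (if i == j then phi t else 1) * (if i == k then g t else 1) *
              (if i == l then g t else 1).
have hE (w : {ffun 'I_n -> T}) : phi (w j) * (g (w k) * g (w l)) = \prod_i h i (w i).
  by rewrite /h !big_split /= !prod_pick mulrA.
under eq_bigr => w _ do rewrite hE.
have h_out i : i != j -> i != k -> i != l -> E (h i) = 1.
  rewrite /h => /negbTE-> /negbTE-> /negbTE-> /=.
  by rewrite -[RHS]mean1; apply: eq_bigr => t _; rewrite !mulr1.
have hj : E (h j) = E phi.
  apply: eq_bigr => t _.
  by rewrite /h eqxx (eq_sym j k) (eq_sym j l) (negbTE kj) (negbTE lj) !mulr1.
rewrite prod_law_prod (bigD1 j) //= (bigD1 k) //= hj.
have [kl|kl] := eqVneq k l.
  rewrite [\prod_(i | _) _]big1 ?mulr1 => [|i /andP[ij ik]]; last by rewrite h_out // -kl.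
  by congr (_ * _); apply: eq_bigr => t _; rewrite /h -kl (negbTE kj) eqxx mul1r expr2.
rewrite (bigD1 l) /=; last by rewrite lj eq_sym.
rewrite [\prod_(i | _) _]big1 ?mulr1 => [|i /andP[/andP[ij ik] il]]; last exact: h_out.
have hk : E (h k) = E g.
  by apply: eq_bigr => t _; rewrite /h (negbTE kj) (negbTE kl) eqxx mul1r mulr1.
have hl : E (h l) = E g.
  by apply: eq_bigr => t _; rewrite /h (negbTE lj) (eq_sym l k) (negbTE kl) eqxx !mul1r.
by rewrite hk hl expr2.
Qed.

Lemma prod_law_second_moment (j : 'I_n) (theta : 'I_n -> R) (phi g : T -> R) :
  E g = 0 ->
  \sum_w prod_law mu w * (phi (w j) * (\sum_(k | k != j) theta k * g (w k)) ^+ 2) =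
  E phi * E (fun t => g t ^+ 2) * \sum_(k | k != j) theta k ^+ 2.
Proof.
move=> g_centered.
have expand (w : {ffun 'I_n -> T}) :
    phi (w j) * (\sum_(k | k != j) theta k * g (w k)) ^+ 2 =
    \sum_(k | k != j) \sum_(l | l != j)
      theta k * theta l * (phi (w j) * (g (w k) * g (w l))).
  rewrite expr2 big_distrlr mulr_sumr; apply: eq_bigr => k _.
  by rewrite mulr_sumr; apply: eq_bigr => l _ /=; ring.
under eq_bigr => w _ do
  (rewrite expand mulr_sumr; under eq_bigr => k _ do rewrite mulr_sumr).
rewrite exchange_big [RHS]mulr_sumr; apply: eq_bigr => k kj; rewrite exchange_big /=.
under eq_bigr => l lj do
  (under eq_bigr => w _ do rewrite mulrCA; rewrite -mulr_sumr prod_law_coord3 //).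
rewrite g_centered expr0n /= (bigD1 k) //= eqxx [X in _ + X]big1 ?addr0.
  by rewrite expr2 mulrC.
by move=> l /andP[_ lk]; rewrite eq_sym (negbTE lk) !mulr0.
Qed.

End ProductLaw.

Section CoordLaw.
Variables (R : realType) (c s : R).

Lemma sum_coord_law (F : int -> R) :
  \sum_t coord_law c s t * F (sgn3 t) =
  c / s * F (-1) + (1 - 2 * c / s) * F 0 + c / s * F 1.
Proof. by rewrite !big_ord_recr big_ord0 /= add0r. Qed.

Lemma coord_law_sum1 : \sum_t coord_law c s t = 1.
Proof.
under eq_bigr do rewrite -[coord_law _ _ _]mulr1.
by rewrite (sum_coord_law (fun=> 1)) !mulr1; ring.
Qed.

Lemma coord_law_ge0 t : 0 <= c / s -> 2 * c / s <= 1 -> 0 <= coord_law c s t.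
Proof. by rewrite /coord_law -mulrA => ? ?; case: ifP => _ //; lra. Qed.

Lemma coord_law_mean : \sum_t coord_law c s t * (sgn3 t)%:~R = 0.
Proof. by rewrite (sum_coord_law intr) rmorphN rmorph1 rmorph0; ring. Qed.

Lemma coord_law_var : \sum_t coord_law c s t * (sgn3 t)%:~R ^+ 2 = 2 * c / s.
Proof.
by rewrite (sum_coord_law (fun z => z%:~R ^+ 2)) rmorphN rmorph1 rmorph0; ring.
Qed.

Lemma coord_law_eq1 : \sum_t coord_law c s t * (sgn3 t == 1)%:R = c / s.
Proof. by rewrite (sum_coord_law (fun z => (z == 1)%:R)) /=; ring. Qed.

Lemma coord_law_eq0 : \sum_t coord_law c s t * (sgn3 t == 0)%:R = 1 - 2 * c / s.
Proof. by rewrite (sum_coord_law (fun z => (z == 0)%:R)) /=; ring. Qed.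

End CoordLaw.

Section ThresholdTest.
Variables (R : realType) (c s : R) (r n : nat) (A : 'M[int]_(r, n)) (y : 'rV[R]_r).
Variable j : 'I_n.
Hypotheses (c_gt0 : 0 < c) (c_le : c <= 1 / 200) (s_ge1 : 1 <= s).
Hypothesis theta_j_neq0 : Frac (yA y A 0 j) != 0.
Hypothesis theta_j_heavy :
  s^-1 * (\sum_(k < n) (Frac (yA y A 0 k)) ^+ 2) <= (Frac (yA y A 0 j)) ^+ 2.

Let P := @xlaw R n c s.
Let p := c / s.
Let x (w : {ffun 'I_n -> 'I_3}) k : R := (sgn3 (w k))%:~R.
Let theta k := Frac (yA y A 0 k).
Let t := theta j.
Let h := `|t| / 2.
Let W w := \sum_(k | k != j) theta k * x w k.
Let St := \sum_(k | k != j) theta k ^+ 2.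
Let D := h ^- 2 * (2 * p * St). (* E[W^2] / h^2, the Chebyshev bound on P(|W| >= h) *)
Let X (w : {ffun 'I_n -> 'I_3}) := A *m xvec w.
Let test (z : 'cV[int]_r) := `|Frac ((y *m map_mx intr z) 0 0 - t)| < h.

Let s_gt0 : 0 < s. Proof. by apply: lt_le_trans s_ge1. Qed.

Let p_gt0 : 0 < p. Proof. by rewrite divr_gt0 ?s_gt0. Qed.

Let p_le_c : p <= c.
Proof. by rewrite ler_pdivrMr ?s_gt0 // ler_peMr // ltW. Qed.

Let P_ge0 w : 0 <= P w.
Proof.
apply: prodr_ge0 => i _; apply: coord_law_ge0; first exact: ltW p_gt0.
have := p_le_c; have := c_le; rewrite -mulrA /p; lra.
Qed.

Let P_sum1 : \sum_w P w = 1.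
Proof. exact/prod_law_sum1/coord_law_sum1. Qed.

Let h_gt0 : 0 < h.
Proof. by rewrite /h divr_gt0 ?normr_gt0. Qed.

Let t_le_half : `|t| <= 2^-1.
Proof.
have /andP[? ?] := Frac_itv (yA y A 0 j).
by rewrite ler_norml; apply/andP; split; rewrite /t /theta; lra.
Qed.

Let D_ge0 : 0 <= D.
Proof.
apply: mulr_ge0; first by rewrite invr_ge0 sqr_ge0.
apply: mulr_ge0; first by rewrite mulr_ge0 // ltW // p_gt0.
by apply: sumr_ge0 => k _; exact: sqr_ge0.
Qed.

Lemma D_le : D <= 8 * c.
Proof.
have St_le : s^-1 * St <= t ^+ 2.
  have := theta_j_heavy; rewrite (bigD1 j) //= mulrDr.
  have : 0 <= s^-1 * t ^+ 2 by rewrite mulr_ge0 ?invr_ge0 ?sqr_ge0 ?ltW ?s_gt0.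
  rewrite /St /t /theta; lra.
have h2 : h ^+ 2 = t ^+ 2 / 4 by rewrite /h exprMn real_normK ?num_real //; field.
have h2_gt0 : 0 < h ^+ 2 by rewrite exprn_gt0 ?h_gt0.
rewrite /D mulrC ler_pdivrMr // h2 /p.
have := ler_wpM2l (ltW c_gt0) St_le.
have -> : 2 * (c / s) * St = 2 * (c * (s^-1 * St)) by rewrite !mulrA.
lra.
Qed.

Lemma yAx_decomp w :
  exists M : int, (y *m map_mx intr (X w)) 0 0 = t * x w j + W w + M%:~R.
Proof.
have [M eM] := mulmx_intr_Frac (yA y A) (xvec w).
have xvecE k : xvec w k 0 = sgn3 (w k) by rewrite mxE.
exists M; rewrite map_mxM mulmxA -/(yA y A) eM (bigD1 j) //= xvecE.
by under eq_bigr do rewrite xvecE.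
Qed.

Lemma test_hit (w : {ffun 'I_n -> 'I_3}) :
  sgn3 (w j) = 1 -> `|W w| < h -> test (X w).
Proof.
move=> xj1 W_small; rewrite /test; have [M ->] := yAx_decomp w.
rewrite /x xj1 rmorph1 mulr1.
have h_le : h <= 4^-1 by have := t_le_half; rewrite /h; lra.
have -> : t + W w + M%:~R - t = W w + M%:~R by ring.
by rewrite FracDz Frac_small_id //; lra.
Qed.

Lemma test_false_alarm (w : {ffun 'I_n -> 'I_3}) :
  sgn3 (w j) = 0 -> test (X w) -> h <= `|W w|.
Proof.
move=> xj0; rewrite /test; have [M ->] := yAx_decomp w.
rewrite /x xj0 rmorph0 mulr0 add0r.
rewrite addrAC FracDz; exact: Frac_sub_small t_le_half.
Qed.

Lemma W_second_moment (phi : 'I_3 -> R) :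
  \sum_w P w * (phi (w j) * W w ^+ 2) = (\sum_t coord_law c s t * phi t) * (2 * p) * St.
Proof.
have := prod_law_second_moment (coord_law_sum1 c s) j theta phi (coord_law_mean c s).
rewrite coord_law_var => e; apply: eq_trans e _; rewrite /p /St; ring.
Qed.

Lemma far_prob (v : int) :
  probE P (fun w => (sgn3 (w j) == v) && (h <= `|W w|)) <=
  (\sum_t coord_law c s t * (sgn3 t == v)%:R) * D.
Proof.
apply: le_trans (chebyshev_event P_ge0 (fun w => sgn3 (w j) == v) W h_gt0) _.
rewrite (W_second_moment (fun t => (sgn3 t == v)%:R)).
set Ev := \sum_t _; have -> : h ^- 2 * (Ev * (2 * p) * St) = Ev * D by rewrite /D; ring.
by [].
Qed.

Lemma coord_prob (v : int) :
  probE P (fun w => sgn3 (w j) == v) = \sum_t coord_law c s t * (sgn3 t == v)%:R.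
Proof.
rewrite probE_indicator.
exact: (prod_law_coord (coord_law_sum1 c s) j (fun t => (sgn3 t == v)%:R)).
Qed.

Lemma hit_prob : p - p * D <= probE P (fun w => test (X w) && (sgn3 (w j) == 1)).
Proof.
have := probE_split P (fun w => sgn3 (w j) == 1) (fun w => h <= `|W w|).
rewrite coord_prob coord_law_eq1 -/p => split_hit.
have := far_prob 1; rewrite coord_law_eq1 -/p => far.
suff : probE P (fun w => (sgn3 (w j) == 1) && ~~ (h <= `|W w|)) <=
       probE P (fun w => test (X w) && (sgn3 (w j) == 1)) by lra.
apply: (probE_mono P_ge0) => w /andP[/eqP xj1]; rewrite -ltNge => W_small.
by rewrite (test_hit xj1 W_small) xj1.
Qed.

Lemma test_prob : probE P (fun w => test (X w)) <= 2 * p + D.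
Proof.
rewrite (probE_split P _ (fun w => sgn3 (w j) == 0)).
have := far_prob 0; rewrite coord_law_eq0 => far.
have far_le : probE P (fun w => test (X w) && (sgn3 (w j) == 0)) <= (1 - 2 * c / s) * D.
  apply: le_trans far; apply: (probE_mono P_ge0) => w /andP[tst /eqP xj0].
  by rewrite xj0 eqxx (test_false_alarm xj0 tst).
have near_le : probE P (fun w => test (X w) && (sgn3 (w j) != 0)) <= 2 * p.
  apply: le_trans (probE_mono P_ge0 (F := fun w => ~~ (sgn3 (w j) == 0)) _) _.
    by move=> w /andP[].
  by rewrite probEC ?P_sum1 // coord_prob coord_law_eq0 /p mulrA; lra.
have : 0 <= 2 * c / s * D by rewrite mulr_ge0 ?D_ge0 // -mulrA mulr_ge0 // ltW ?p_gt0.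
rewrite mulrBl mul1r in far_le; lra.
Qed.
Lemma product_event_prob :
  \sum_w P w * probE P (fun w' => test (X w) && (sgn3 (w' j) == 1)) =
  probE P (fun w => test (X w)) * p.
Proof.
rewrite probE_indicator mulr_suml; apply: eq_bigr => w _.
case: (test (X w)) => /=; first by rewrite coord_prob coord_law_eq1 mulr1.
by rewrite /probE big_pred0 // mulr0 mul0r.
Qed.

Lemma mutual_info_test_ge : c / 4 / s <= mutual_info P X (fun w => sgn3 (w j)).
Proof.
pose S (zb : 'cV[int]_r * int) := test zb.1 && (zb.2 == 1).
have := mutual_info_ge_event P_ge0 P_sum1 (X := X) (Y := fun w => sgn3 (w j)) (S := S).
rewrite /S /= product_event_prob.
set al := probE P _; set PB := probE P _.
have al_le : al <= PB by apply: (probE_mono P_ge0) => w /andP[].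
have p_pos := p_gt0.
have al_ge : p - p * D <= al := hit_prob.
have PB_le : PB * p <= (2 * p + D) * p := ler_wpM2r (ltW p_gt0) test_prob.
have pD_le := ler_wpM2l (ltW p_gt0) D_le; have pc_le := ler_wpM2l (ltW p_gt0) c_le.
have pp_le := ler_wpM2l (ltW p_gt0) p_le_c; rewrite mulrDl in PB_le.
have be_gt0 : 0 < PB * p by rewrite mulr_gt0 //; lra.
have ratio : 16 * (PB * p) <= al by lra.
move=> /(_ (lt_le_trans (mulr_gt0 _ be_gt0) ratio) be_gt0) MI_ge.
have -> : c / 4 / s = p / 4 by rewrite /p mulrAC.
have := kl_event_ratio16 be_gt0 ratio; lra.
Qed.

End ThresholdTest.

Theorem mainTheorem4 (R : realType) :
  exists c0 : R, 0 < c0 /\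
  forall c : R, 0 < c -> c <= c0 ->
  exists K : R, 0 < K /\
  forall (r n : nat) (A : 'M[int]_(r, n)) (s : R) (y : 'rV[R]_r) (j : 'I_n),
    1 <= s ->
    Frac (yA y A 0 j) != 0 ->
    s^-1 * (\sum_(k < n) (Frac (yA y A 0 k)) ^+ 2) <= (Frac (yA y A 0 j)) ^+ 2 ->
    K / s <= mutual_info (@xlaw R n c s)
                         (fun w => A *m xvec w) (fun w => sgn3 (w j)).
Proof.
exists (1 / 200); split=> [|c c_gt0 c_le]; first lra.
exists (c / 4); split=> [|r n A s y j s_ge1 tj_neq0 tj_heavy]; first lra.
exact: (mutual_info_test_ge c_gt0 c_le s_ge1 tj_neq0 tj_heavy).
Qed.
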